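(* Consider Method 2.1 (described in the context) for minimizing the discrete maximum function $f$ on $D$. Suppose the method does not terminate and the numbers $\varepsilon_k$ are chosen with $\varepsilon_k>0$ for all $k\in K$ and $\varepsilon_k\to0$. Then the sequences $\{x_k\},\{\sigma_k\}$ are defined for all $k\in K$ and $\lim_{k\to\infty}f(x_k)=f^*$, $\lim_{k\to\infty}\sigma_k=f^*$.
   Context: Setting: $D\subset\mathbb{R}^n$ closed convex; $f_j$, $j\in J=\{1,\dots,m\}$, convex on $\mathbb{R}^n$; $f(x)=\max_{j\in J}f_j(x)$; $f^*=\min_Df$ is attained; $X^*=\{x\in D:f(x)=f^*\}$; $K=\{0,1,\dots\}$; $\partial f_j(x)$ is the subdifferential. Method 2.1: fix $x^*\in X^*$; choose a closed convex bounded $G_0\subseteq D$ with $x^*\in G_0$, a closed convex $M_0\subset\mathbb{R}^{n+1}$ with $(x^*,f^* )\in M_0$, numbers $\varepsilon_0\ge0$ and $\bar\gamma_0\le f^*$; $i=k=0$. Step 1: let $(y_i,\gamma_i)$ be a solution of $\min\{\gamma:(x,\gamma)\in M_i,\ x\in G_i,\ \gamma\ge\bar\gamma_i\}$; if $f(y_i)=\gamma_i$ stop. Step 2: if $f(y_i)-\gamma_i>\varepsilon_k$, choose closed convex $S_i\subseteq\mathbb{R}^{n+1}$ with $(x^*,f^* )\in S_i$ and set $Q_i=M_i\cap S_i$; otherwise set $i_k=i$, $x_k=y_{i_k}$, $\sigma_k=\gamma_{i_k}$, choose closed convex $Q_i\ni(x^*,f^* )$, choose $\varepsilon_{k+1}\ge0$,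 $k\leftarrow k+1$. Step 3: let $J(y_i)=\{j:f_j(y_i)=f(y_i)\}$ and choose $J_i\subset J$ containing at least one index of $J(y_i)$. Step 4: for $j\in J_i$ choose a nonempty finite $A_i^j\subset\partial f_j(y_i)$; $M_{i+1}=Q_i\cap\{(x,\gamma):f_j(y_i)+\langle a,x-y_i\rangle\le\gamma\ \forall j\in J_i,\ a\in A_i^j\}$. Step 5: choose closed convex $G_{i+1}\subseteq G_0$ with $x^*\in G_{i+1}$ and a number $\bar\gamma_{i+1}$ with $\bar\gamma_0\le\bar\gamma_{i+1}\le f^*$; $i\leftarrow i+1$; go to Step 1. *)

From mathcomp Require Import all_boot all_order all_algebra.
From mathcomp Require Import all_classical all_reals all_analysis.
Import numFieldNormedType.Exports.
Set Implicit Arguments. Unset Strict Implicit. Unset Printing Implicit Defensive.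
Import Order.TTheory GRing.Theory Num.Theory.
Local Open Scope classical_set_scope.
Local Open Scope ring_scope.

Definition dotv (R : realType) (n : nat) (a x : 'rV[R]_n) : R :=
  \sum_(i < n) a 0 i * x 0 i.

Definition subdiff (R : realType) (n : nat) (g : 'rV[R]_n -> R) (y : 'rV[R]_n)
  : set 'rV[R]_n :=
  [set a | forall x, g y + dotv a (x - y) <= g x].

Definition fmax (R : realType) (n m : nat) (fs : 'I_m.+1 -> 'rV[R]_n -> R)
  (x : 'rV[R]_n) : R :=
  \big[Num.max/fs ord0 x]_(j < m.+1) fs j x.

Definition cut_set (R : realType) (n m : nat) (fs : 'I_m.+1 -> 'rV[R]_n -> R)
  (y : 'rV[R]_n) (Jy : {set 'I_m.+1}) (A : 'I_m.+1 -> seq 'rV[R]_n)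
  : set ('rV[R]_n * R) :=
  [set p | forall j, j \in Jy -> forall a, a \in A j ->
           fs j y + dotv a (p.1 - y) <= p.2].

From mathcomp Require Import all_boot all_order all_algebra.
From mathcomp Require Import all_classical all_reals all_analysis.
From mathcomp Require Import ring lra.
Import numFieldNormedType.Exports.
Import Order.TTheory GRing.Theory Num.Theory.
Local Open Scope classical_set_scope.
Local Open Scope ring_scope.

(* The point (xstar, fstar) survives every cut, so gam i <= fstar <= f (y i).
   If from some iteration i0 on the gap f (y i) - gam i stayed above eps_k,
   the counter k would freeze, the sets M i would decrease, and every later
   y i would satisfy all cuts made at the earlier y l.  Subgradients of convex
   functions are bounded on the bounded set G 0, so the cut at y l bounds the
   gap at y i by a multiple of |y i - y l|: the iterates stay uniformly apart,
   contradicting the compactness of G 0.  Hence every eps_k is met, and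
   fstar <= f (x_k) <= sigma_k + eps_k <= fstar + eps_k. *)

Lemma le_fmax {R : realType} {n m : nat} (fs : 'I_m.+1 -> 'rV[R]_n -> R) x j :
  fs j x <= fmax fs x.
Proof. exact: le_bigmax. Qed.

Section RowVectors.
Context {R : realType} {n : nat}.
Implicit Types (x a e : 'rV[R]_n).

Lemma normr_entry_le x k : `|x 0 k| <= `|x|.
Proof.
by rewrite -[leRHS]/(mx_norm x) mx_normrE; exact: (le_bigmax _ _ (0, k)).
Qed.

Lemma dotvN a x : dotv a (- x) = - dotv a x.
Proof. by rewrite /dotv -sumrN; apply: eq_bigr => i _; rewrite !mxE mulrN. Qed.

Lemma dotv_delta a k : dotv a (delta_mx 0 k) = a 0 k.
Proof.
rewrite /dotv (bigD1 k) //= mxE !eqxx mulr1 big1 ?addr0 // => i /negbTE ik.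
by rewrite mxE ik andbF mulr0.
Qed.

Lemma normr_dotv_le a x C :
  (forall k, `|a 0 k| <= C) -> `|dotv a x| <= n%:R * C * `|x|.
Proof.
move=> aC; apply: le_trans (ler_norm_sum _ _ _) _.
apply: le_trans (_ : \sum_(i < n) C * `|x| <= _).
  by apply: ler_sum => i _; rewrite normrM ler_pM ?normr_entry_le.
by rewrite sumr_const card_ord -mulrA mulr_natl.
Qed.

Section ConvexFunction.
Context {g : 'rV[R]_n -> R}.
Hypothesis cvx_g : convex_function setT g.

Lemma convex_functionP t x y : 0 <= t <= 1 ->
  g (t *: x + (1 - t) *: y) <= t * g x + (1 - t) * g y.
Proof.
move=> t01; have t_itv : Itv.spec (@Itv.num_sem R) (Itv.Real `[0%Z, 1%Z]) t.
  rewrite /= /Itv.num_sem /= in_itv /= t01 andbT ger0_real //.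
  by case/andP: t01.
exact: (cvx_g (Itv.mk t_itv) x y (in_setT _) (in_setT _)).
Qed.

Lemma convex_le_max_segment e C s : `|s| <= C ->
  g (s *: e) <= Num.max (g (C *: e)) (g (- C *: e)).
Proof.
move=> sC; have C0 : 0 <= C := le_trans (normr_ge0 s) sC.
have [C00|Cn0] := eqVneq C 0.
  by move: sC; rewrite C00 normr_le0 => /eqP->; rewrite le_max lexx.
have Cp : 0 < C by rewrite lt_neqAle eq_sym Cn0.
move: sC; rewrite ler_norml => /andP[s1 s2].
pose t := (s + C) / (2 * C).
have t01 : 0 <= t <= 1 by rewrite divr_ge0 ?ler_pdivrMr /=; lra.
have -> : s *: e = t *: (C *: e) + (1 - t) *: (- C *: e).
  by rewrite !scalerA -scalerDl; congr (_ *: _); rewrite /t; field; lra.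
apply: le_trans (convex_functionP _ _ _ t01) _.
have := le_max (g (C *: e)) (g (C *: e)) (g (- C *: e)).
have := le_max (g (- C *: e)) (g (C *: e)) (g (- C *: e)).
rewrite !lexx orbT /=; case/andP: t01; nra.
Qed.

(* Induction on the number of leading coordinates allowed to be nonzero; the
   last one is split off by a midpoint, which is why the radius doubles. *)
Lemma convex_bounded_above_on_box_support p B : exists U, forall x,
  (forall k, `|x 0 k| <= B) -> (forall k : 'I_n, (p <= k)%N -> x 0 k = 0) ->
  g x <= U.
Proof.
elim: p B => [|p IH] B.
  exists (g 0) => x _ x0; suff -> : x = 0 by [].
  by apply/rowP => k; rewrite mxE x0.
have [pn|np] := ltnP p n; last first.
  have [U HU] := IH B; exists U => x xB xs; apply: HU => // k pk.
  by move: (leq_trans np pk); rewrite leqNgt ltn_ord.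
pose pk := Ordinal pn; pose e : 'rV[R]_n := delta_mx 0 pk.
have [U HU] := IH (2 * B).
exists ((U + Num.max (g ((2 * B) *: e)) (g (- (2 * B) *: e))) / 2) => x xB xs.
have B0 : 0 <= B := le_trans (normr_ge0 _) (xB pk).
pose x' := x - x 0 pk *: e.
have x'E k : x' 0 k = if k == pk then 0 else x 0 k.
  rewrite /x' /e !mxE eqxx /=.
  by case: eqVneq => [->|_]; rewrite ?mulr1 ?mulr0 ?subrr ?subr0.
have -> : x = (1/2) *: (2 *: x') + (1 - 1/2) *: ((2 * x 0 pk) *: e).
  by apply/rowP => k; rewrite /x' !mxE; field.
apply: le_trans (convex_functionP _ _ _ _) _; first lra.
have gx' : g (2 *: x') <= U.
  apply: HU => k; rewrite mxE x'E.
    case: eqP => _; first by rewrite mulr0 normr0 mulr_ge0.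
    by rewrite normrM ger0_norm ?ler_pM2l ?xB.
  case: eqVneq => [_|kp] pk'; first by rewrite mulr0.
  rewrite xs ?mulr0 // ltn_neqAle pk' andbT; apply: contra kp => /eqP kpE.
  by apply/eqP/val_inj; rewrite /= kpE.
have := convex_le_max_segment e (2 * B) (2 * x 0 pk).
rewrite normrM ger0_norm // ler_pM2l // xB => /(_ isT).
lra.
Qed.

Lemma convex_bounded_above_on_box B : exists U, forall x,
  (forall k, `|x 0 k| <= B) -> g x <= U.
Proof.
have [U HU] := convex_bounded_above_on_box_support n B.
by exists U => x xB; apply: HU => // k; rewrite leqNgt ltn_ord.
Qed.

(* A subgradient at y is bounded by the oscillation of g on the unit box
   around y, and g y is bounded below through the midpoint 0 of y and -y. *)
Lemma subdiff_bounded_on_box (B : R) : exists C, 0 <= C /\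
  forall (y a : 'rV[R]_n), (forall k, `|y 0 k| <= B) -> subdiff g y a ->
  forall k, `|a 0 k| <= C.
Proof.
have [U HU] := convex_bounded_above_on_box (B + 1).
exists (Num.max 0 (2 * U - 2 * g 0)); split; first by rewrite le_max lexx.
move=> y a yB sa k; pose e : 'rV[R]_n := delta_mx 0 k.
have e1 i : `|e 0 i| <= 1.
  by rewrite /e mxE; case: (_ && _); rewrite ?normr1 ?normr0.
have gye : g (y + e) <= U.
  apply: HU => i; rewrite mxE; apply: le_trans (ler_normD _ _) _.
  by rewrite lerD.
have gy_e : g (y - e) <= U.
  apply: HU => i; rewrite mxE; apply: le_trans (ler_normD _ _) _.
  by rewrite lerD // mxE normrN.
have gNy : g (- y) <= U.
  by apply: HU => i; rewrite mxE normrN (le_trans (yB i)) // lerDl.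
have g0 : g 0 <= 1/2 * g y + (1 - 1/2) * g (- y).
  have <- : (1/2 : R) *: y + (1 - 1/2) *: (- y) = 0.
    by rewrite scalerN -scalerBl (_ : 1/2 - (1 - 1/2) = 0) ?scale0r //; field.
  by apply: convex_functionP; lra.
have := sa (y + e); rewrite addrAC subrr add0r /e dotv_delta => s1.
have := sa (y - e); rewrite addrAC subrr add0r dotvN /e dotv_delta => s2.
have := le_max (2 * U - 2 * g 0) 0 (2 * U - 2 * g 0).
rewrite lexx orbT /= => hC.
rewrite ler_norml; apply/andP; split; lra.
Qed.

End ConvexFunction.

End RowVectors.

Lemma compact_seq_close {R : realType} {V : normedModType R} {K : set V}
    {u : nat -> V} (N : nat) {d : R} :
  compact K -> (forall i, K (u i)) -> 0 < d ->
  exists l i, [/\ (N <= l)%N, (l < i)%N & `|u i - u l| < d].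
Proof.
move=> cK Ku d0.
have [p [_ clp]] : exists p, (K `&` cluster (u @ \oo)) p.
  apply: (cK _ (fmap_proper_filter u eventually_filter)).
  by exists 0%N => // i _; exact: Ku.
have often N' : exists2 i, (N' <= i)%N & `|p - u i| < d / 2.
  have : (u @ \oo) (u @` [set i | (N' <= i)%N]) by exists N' => // i; exists i.
  have d2_gt0 : 0 < d / 2 by rewrite divr_gt0.
  move=> /(clp _ _)/(_ (nbhsx_ballx p _ d2_gt0)) [_ [[i Ni <-]]].
  by rewrite -ball_normE /ball_ /=; exists i.
have [l Nl pl] := often N; have [i li pi] := often l.+1.
exists l, i; split => //; rewrite -(subrKA p).
by apply: le_lt_trans (ler_normD _ _) _; rewrite distrC; lra.
Qed.

Lemma fmax_gap_le_cut {R : realType} {n m : nat}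
    {fs : 'I_m.+1 -> 'rV[R]_n -> R} {j j'} {yl yi a b : 'rV[R]_n} {g C : R} :
  fs j yl = fmax fs yl -> fs j yl + dotv a (yi - yl) <= g ->
  fs j' yi = fmax fs yi -> subdiff (fs j') yi b ->
  (forall k, `|a 0 k| <= C) -> (forall k, `|b 0 k| <= C) ->
  fmax fs yi - g <= 2 * (n%:R * C) * `|yi - yl|.
Proof.
move=> fj cut fj' sb aC bC; have := sb yl; rewrite fj'.
have := le_fmax fs yl j'.
have := normr_dotv_le _ (yi - yl) _ aC; have := normr_dotv_le _ (yl - yi) _ bC.
rewrite distrC; have := ler_norm (- dotv a (yi - yl)).
have := ler_norm (- dotv b (yl - yi)); rewrite !normrN.
lra.
Qed.

Section Method21.
Variables (R : realType) (n m : nat) (fs : 'I_m.+1 -> 'rV[R]_n -> R)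
  (D : set 'rV[R]_n) (xstar : 'rV[R]_n) (fstar : R)
  (G : nat -> set 'rV[R]_n) (M Q S : nat -> set ('rV[R]_n * R))
  (gbar : nat -> R) (y : nat -> 'rV[R]_n) (gam : nat -> R)
  (Js : nat -> {set 'I_m.+1}) (A : nat -> 'I_m.+1 -> seq 'rV[R]_n)
  (kk : nat -> nat) (eps : nat -> R).

Local Notation gap i := (fmax fs (y i) - gam i).

Hypotheses (fs_convex : forall j, convex_function setT (fs j))
  (fstarE : fmax fs xstar = fstar)
  (fstar_min : forall x, D x -> fstar <= fmax fs x)
  (G0_closed : closed (G 0)) (G0_bounded : bounded_set (G 0))
  (G0_sub_D : G 0 `<=` D) (G0_xstar : G 0 xstar)
  (M0_xstar : M 0 (xstar, fstar)) (gbar0_le : gbar 0 <= fstar)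
  (kk0 : kk 0 = 0%N)
  (step1_feasible : forall i,
     [/\ M i (y i, gam i), G i (y i) & gbar i <= gam i])
  (step1_min : forall i x g, M i (x, g) -> G i x -> gbar i <= g -> gam i <= g)
  (step2_big : forall i, eps (kk i) < gap i ->
     [/\ closed (S i), convex_set (S i), S i (xstar, fstar),
         Q i = M i `&` S i & kk i.+1 = kk i])
  (step2_small : forall i, gap i <= eps (kk i) ->
     [/\ closed (Q i), convex_set (Q i), Q i (xstar, fstar)
         & kk i.+1 = (kk i).+1])
  (step3 : forall i, exists2 j, j \in Js i & fs j (y i) = fmax fs (y i))
  (step4 : forall i j, j \in Js i ->
     A i j != [::] /\ (forall a, a \in A i j -> subdiff (fs j) (y i) a))
  (M_next : forall i, M i.+1 = Q i `&` cut_set fs (y i) (Js i) (A i))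
  (step5 : forall i, [/\ closed (G i.+1), convex_set (G i.+1), G i.+1 `<=` G 0
               & G i.+1 xstar])
  (gbar_next : forall i, gbar 0 <= gbar i.+1 <= fstar)
  (eps_gt0 : forall k, 0 < eps k) (eps_cvg0 : eps @ \oo --> 0).

Lemma G_sub_G0 i : G i `<=` G 0.
Proof. by case: i => [|i] //; case: (step5 i). Qed.

Lemma G_xstar i : G i xstar.
Proof. by case: i => [|i] //; case: (step5 i). Qed.

Lemma y_in_G0 i : G 0 (y i).
Proof. by case: (step1_feasible i) => _ /G_sub_G0. Qed.

Lemma fstar_le_fy i : fstar <= fmax fs (y i).
Proof. exact/fstar_min/G0_sub_D/y_in_G0. Qed.

Lemma M_xstar i : M i (xstar, fstar).
Proof.
elim: i => [//|i IH]; rewrite M_next; split.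
  case: (ltrP (eps (kk i)) (gap i)) => [big|].
    by case: (step2_big _ big) => _ _ Sx -> _.
  by case/step2_small.
move=> j ji a aA /=; rewrite -fstarE.
exact: le_trans ((step4 _ _ ji).2 a aA xstar) (le_fmax fs xstar j).
Qed.

Lemma gam_le_fstar i : gam i <= fstar.
Proof.
apply: step1_min (M_xstar i) (G_xstar i) _.
by case: i => [|i] //; case/andP: (gbar_next i).
Qed.

Lemma cut_subgradients_bounded : exists C, 0 <= C /\
  forall i j a, j \in Js i -> a \in A i j -> forall k, `|a 0 k| <= C.
Proof.
have [Mb [_ Mb_bound]] := G0_bounded.
have yB i k : `|y i 0 k| <= Mb + 1.
  apply: le_trans (normr_entry_le _ _) (Mb_bound _ _ _ (y_in_G0 i)).
  by rewrite ltrDl.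
have [C HC] := choice (fun j => subdiff_bounded_on_box (fs_convex j) (Mb + 1)).
exists (\sum_j C j); have C0 j : 0 <= C j by case: (HC j).
split=> [|i j a ji aA k]; first exact: sumr_ge0.
apply: le_trans ((HC j).2 _ _ (yB i) ((step4 _ _ ji).2 a aA) k) _.
by rewrite (bigD1 j) //= lerDl sumr_ge0.
Qed.

Lemma active_cut i : exists j a, [/\ j \in Js i, fs j (y i) = fmax fs (y i),
  a \in A i j & subdiff (fs j) (y i) a].
Proof.
have [j ji fj] := step3 i; have [] := step4 _ _ ji.
case Aij: (A i j) => [//|a s] _ sub; exists j, a.
by rewrite Aij; split; rewrite ?mem_head //; apply: sub; rewrite mem_head.
Qed.

Section Stalling.
Variable i0 : nat.
Hypothesis gap_big : forall i, (i0 <= i)%N -> eps (kk i) < gap i.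

Lemma kk_stalls i : (i0 <= i)%N -> kk i = kk i0.
Proof.
elim: i => [|i IH]; first by rewrite leqn0 => /eqP->.
rewrite leq_eqVlt => /orP[/eqP<-//|i0i].
by case: (step2_big _ (gap_big _ i0i)) => _ _ _ _ ->; exact: IH.
Qed.

Lemma M_sub_cut l i : (i0 <= l)%N -> (l < i)%N ->
  M i `<=` cut_set fs (y l) (Js l) (A l).
Proof.
move=> i0l; elim: i => // i IH; rewrite ltnS leq_eqVlt => /orP[/eqP<-|li].
  by rewrite M_next => p [].
have [_ _ _ Qi _] := step2_big _ (gap_big _ (leq_trans i0l (ltnW li))).
by rewrite M_next Qi => p [[/(IH li) ? _] _].
Qed.

(* y i satisfies the cut made at y l and its gap exceeds eps (kk i0); bounded
   subgradients turn this into a lower bound on |y i - y l|. *)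
Lemma stalled_iterates_apart : exists2 d, 0 < d &
  forall l i, (i0 <= l)%N -> (l < i)%N -> d < `|y i - y l|.
Proof.
have [C [C0 HC]] := cut_subgradients_bounded.
have K0 : 0 <= n%:R * C by rewrite mulr_ge0.
exists (eps (kk i0) / (2 * (n%:R * C) + 1)).
  by rewrite divr_gt0 ?eps_gt0 //; lra.
move=> l i i0l li; have i0i := leq_trans i0l (ltnW li).
have [jl [al [jlJ fjl al_in _]]] := active_cut l.
have [ji [ai [jiJ fji ai_in sub_i]]] := active_cut i.
have [Mi _ _] := step1_feasible i.
have := fmax_gap_le_cut fjl (M_sub_cut _ _ i0l li _ Mi jl jlJ al al_in) fji
  sub_i (HC _ _ _ jlJ al_in) (HC _ _ _ jiJ ai_in).
have := gap_big _ i0i; rewrite kk_stalls // ltr_pdivrMr; last lra.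
have := normr_ge0 (y i - y l); rewrite /=; lra.
Qed.

End Stalling.

Lemma gap_small_infinitely_often i0 :
  exists2 i, (i0 <= i)%N & gap i <= eps (kk i).
Proof.
apply: contrapT => never_small.
have gap_big i : (i0 <= i)%N -> eps (kk i) < gap i.
  move=> i0i; rewrite ltNge; apply/negP => small_i.
  by apply: never_small; exists i.
have [d d0 apart] := stalled_iterates_apart _ gap_big.
have [l [i [i0l li close]]] := compact_seq_close i0
  (bounded_closed_compact G0_bounded G0_closed) y_in_G0 d0.
by move: (apart l i i0l li); rewrite ltNge ltW.
Qed.

Lemma small_gap_ahead_keeps_k d i0 : gap (i0 + d) <= eps (kk (i0 + d)) ->
  exists i, [/\ (i0 <= i)%N, kk i = kk i0 & gap i <= eps (kk i)].
Proof.
elim: d i0 => [|d IH] i0 small_d; first by exists i0; rewrite addn0 in small_d.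
have [small_i0|big_i0] := lerP (gap i0) (eps (kk i0)); first by exists i0.
rewrite addnS -addSn in small_d; have [i [i0i ki small_i]] := IH _ small_d.
have [_ _ _ _ kS] := step2_big _ big_i0.
by exists i; split => //; [exact: ltnW | rewrite ki kS].
Qed.

Lemma small_gap_at_current_k i0 :
  exists i, [/\ (i0 <= i)%N, kk i = kk i0 & gap i <= eps (kk i)].
Proof.
have [i i0i small_i] := gap_small_infinitely_often i0.
by apply: (small_gap_ahead_keeps_k (i - i0)); rewrite subnKC.
Qed.

Lemma every_k_attained k : exists i, kk i = k /\ gap i <= eps k.
Proof.
elim: k => [|k [i [<- small_i]]].
  have [i [_ ki small_i]] := small_gap_at_current_k 0.
  by exists i; rewrite -kk0 -ki.
have [_ _ _ kS] := step2_small _ small_i.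
have [i' [_ ki' small_i']] := small_gap_at_current_k i.+1.
by exists i'; rewrite -kS -ki'.
Qed.

Lemma attained_cvg (ik : nat -> nat) :
  (forall k, kk (ik k) = k /\ gap (ik k) <= eps k) ->
  (fun k => fmax fs (y (ik k))) @ \oo --> fstar /\
  (fun k => gam (ik k)) @ \oo --> fstar.
Proof.
move=> ikP.
have upper : (fun k => fstar + eps k) @ \oo --> fstar.
  by rewrite -[X in _ --> X]addr0; apply: cvgD => //; exact: cvg_cst.
have lower : (fun k => fstar - eps k) @ \oo --> fstar.
  by rewrite -[X in _ --> X]subr0; apply: cvgB => //; exact: cvg_cst.
have [fy_ge gam_le] := (fstar_le_fy, gam_le_fstar).
split; [apply: (squeeze_cvgr _ (cvg_cst fstar) upper)
       |apply: (squeeze_cvgr _ lower (cvg_cst fstar))];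
  apply: nearW => k; have := fy_ge (ik k); have := gam_le (ik k);
  case: (ikP k) => _ /=; lra.
Qed.

End Method21.

Theorem theorem2p1p3
  (R : realType) (n m : nat)
  (fs : 'I_m.+1 -> 'rV[R]_n -> R)
  (D : set 'rV[R]_n) (xstar : 'rV[R]_n) (fstar : R)
  (* iteration data, indexed by i *)
  (G : nat -> set 'rV[R]_n) (M Q S : nat -> set ('rV[R]_n * R))
  (gbar : nat -> R) (y : nat -> 'rV[R]_n) (gam : nat -> R)
  (Js : nat -> {set 'I_m.+1}) (A : nat -> 'I_m.+1 -> seq 'rV[R]_n)
  (* the counter k at iteration i, and the tolerances eps_k *)
  (kk : nat -> nat) (eps : nat -> R) :
  (* setting *)
  closed D -> convex_set D ->
  (forall j, convex_function setT (fs j)) ->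
  D xstar -> fmax fs xstar = fstar ->
  (forall x, D x -> fstar <= fmax fs x) ->
  (* initialization *)
  closed (G 0) -> convex_set (G 0) -> bounded_set (G 0) -> G 0 `<=` D ->
  G 0 xstar ->
  closed (M 0) -> convex_set (M 0) -> M 0 (xstar, fstar) ->
  gbar 0 <= fstar ->
  kk 0 = 0%N ->
  (* Step 1: (y_i, gam_i) solves min {g : (x,g) in M_i, x in G_i, g >= gbar_i} *)
  (forall i, [/\ M i (y i, gam i), G i (y i) & gbar i <= gam i]) ->
  (forall i x g, M i (x, g) -> G i x -> gbar i <= g -> gam i <= g) ->
  (* the method does not terminate *)
  (forall i, fmax fs (y i) <> gam i) ->
  (* Step 2 *)
  (forall i, eps (kk i) < fmax fs (y i) - gam i ->
     [/\ closed (S i), convex_set (S i), S i (xstar, fstar),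
         Q i = M i `&` S i & kk i.+1 = kk i]) ->
  (forall i, fmax fs (y i) - gam i <= eps (kk i) ->
     [/\ closed (Q i), convex_set (Q i), Q i (xstar, fstar)
         & kk i.+1 = (kk i).+1]) ->
  (* Step 3 *)
  (forall i, exists2 j, j \in Js i & fs j (y i) = fmax fs (y i)) ->
  (* Step 4 *)
  (forall i j, j \in Js i ->
     A i j != [::] /\ (forall a, a \in A i j -> subdiff (fs j) (y i) a)) ->
  (forall i, M i.+1 = Q i `&` cut_set fs (y i) (Js i) (A i)) ->
  (* Step 5 *)
  (forall i, [/\ closed (G i.+1), convex_set (G i.+1), G i.+1 `<=` G 0
               & G i.+1 xstar]) ->
  (forall i, gbar 0 <= gbar i.+1 <= fstar) ->
  (* tolerances *)
  (forall k, 0 < eps k) -> eps @ \oo --> 0 ->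
  (* conclusion: x_k = y_{i_k}, sigma_k = gam_{i_k} are defined for all k,
     and f(x_k) -> f*, sigma_k -> f* *)
  (forall k, exists i, kk i = k /\ fmax fs (y i) - gam i <= eps k) /\
  (forall ik : nat -> nat,
     (forall k, kk (ik k) = k /\ fmax fs (y (ik k)) - gam (ik k) <= eps k) ->
     (fun k => fmax fs (y (ik k))) @ \oo --> fstar /\
     (fun k => gam (ik k)) @ \oo --> fstar).
Proof.
move=> _ _ fs_convex _ fstarE fstar_min G0_closed _ G0_bounded G0_sub_D G0_xstar
  _ _ M0_xstar gbar0_le kk0 step1_feasible step1_min _ step2_big step2_small
  step3 step4 M_next step5 gbar_next eps_gt0 eps_cvg0.
split; [eapply every_k_attained | eapply attained_cvg]; eassumption.
Qed.
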